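(* (i) For every $\epsilon>0$ there exist $\beta,\gamma\in\mathcal{I}_\alpha$ with $d_H(\beta,\gamma)<\epsilon$ and $d_\alpha(\beta,\gamma)>1/\epsilon$. (ii) For all $\beta,\gamma\in\mathcal{I}_\alpha$, $d_H'(\beta,\gamma)\le d_\alpha(\beta,\gamma)$. (iii) The metrics $d_H$ and $d_H'$ generate the same topology on $\mathcal{I}_H$.
   Context: Fix $\alpha\in(0,1)$. An interval partition is a set $\beta$ of disjoint open subintervals (blocks) of some interval $[0,L]$ that cover $[0,L]$ up to a Lebesgue-null set; write $\|\beta\|:=L$ and $\mathrm{Leb}(U)$ for the length of a block $U$. $\mathcal{I}_H$ is the set of all interval partitions. For $\beta\in\mathcal{I}_H$ let $C_\beta:=[0,\|\beta\|]\setminus\bigcup_{U\in\beta}U$, and $d_H(\beta,\gamma)$ the Hausdorff distance between $C_\beta$ and $C_\gamma$. $\beta$ has the $\alpha$-diversity property if for every $t\in[0,\|\beta\|]$ the limit $\mathscr{D}_\beta(t):=\Gamma(1-\alpha)\lim_{h\downarrow0}h^\alpha\#\{(a,b)\in\beta\colon b-a>h,\ b\le t\}$ exists; $\mathcal{I}_\alpha$ is the set of such partitions. For $U\in\beta$, $\mathscr{D}_\beta(U):=\mathscr{D}_\beta(t)$ for $t\in U$; $\mathscr{D}_\beta(\infty):=\mathscr{D}_\beta(\|\beta\|)$. A correspondence between $\beta,\gamma$ is a finite sequence $(U_j,V_j)_{j\in[n]}$, $n\ge0$, of pairs in $\beta\times\gamma$ with $(U_j)_j$ and $(V_j)_j$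 each strictly increasing in left-to-right order. Its Hausdorff distortion is the maximum of (i') $\sum_{j}|\mathrm{Leb}(U_j)-\mathrm{Leb}(V_j)|+\|\beta\|-\sum_j\mathrm{Leb}(U_j)$ and (ii') $\sum_{j}|\mathrm{Leb}(U_j)-\mathrm{Leb}(V_j)|+\|\gamma\|-\sum_j\mathrm{Leb}(V_j)$; for $\beta,\gamma\in\mathcal{I}_\alpha$ its $\alpha$-distortion is the maximum of (i'), (ii'), $\sup_j|\mathscr{D}_\beta(U_j)-\mathscr{D}_\gamma(V_j)|$ and $|\mathscr{D}_\beta(\infty)-\mathscr{D}_\gamma(\infty)|$. $d_H'$ and $d_\alpha$ are the infima over all correspondences of the Hausdorff distortion and the $\alpha$-distortion, respectively. *)

From HB Require Import structures.
From mathcomp Require Import all_boot all_order all_algebra.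
From mathcomp Require Import all_classical all_reals all_analysis.
From mathcomp Require Import finmap.
Set Implicit Arguments. Unset Strict Implicit. Unset Printing Implicit Defensive.
Import Order.TTheory GRing.Theory Num.Theory.
Import numFieldNormedType.Exports.
Local Open Scope classical_set_scope.
Local Open Scope ring_scope.

Definition Gamma (R : realType) (s : R) : R :=
  fine (\int[@lebesgue_measure R]_(x in `]0%R, +oo[%classic)
          ((x `^ (s - 1)) * expR (- x))%:E).

Definition oint (R : realType) (p : R * R) : set R := `]p.1, p.2[%classic.

Definition blen (R : realType) (p : R * R) : R := p.2 - p.1.

Record IP (R : realType) := mkIP {
  ipL : R;
  blocks : set (R * R);
  ipL_ge0 : 0 <= ipL;
  blocks_sub : forall p, blocks p -> 0 <= p.1 /\ p.1 < p.2 /\ p.2 <= ipL;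
  blocks_disj : forall p q, blocks p -> blocks q -> p <> q ->
                  oint p `&` oint q = set0;
  blocks_cover : (@lebesgue_measure R).-negligible
                   (`[0, ipL]%classic `\` \bigcup_(p in blocks) oint p)
}.


Definition Cset (R : realType) (b : IP R) : set R :=
  `[0, ipL b]%classic `\` \bigcup_(p in blocks b) oint p.

Definition hdist_sets (R : realType) (A B : set R) : R :=
  Num.max (sup [set inf [set `|x - y| | y in B] | x in A])
          (sup [set inf [set `|x - y| | x in A] | y in B]).

Definition dH (R : realType) (b g : IP R) : R := hdist_sets (Cset b) (Cset g).

Definition nblocks (R : realType) (b : IP R) (h t : R) : nat :=
  #|` fset_set [set p | blocks b p /\ h < p.2 - p.1 /\ p.2 <= t] |.

Definition div_fun (R : realType) (alpha : R) (b : IP R) (t : R) : R -> R :=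
  fun h => h `^ alpha * (nblocks b h t)%:R.

Definition diverse (R : realType) (alpha : R) (b : IP R) : Prop :=
  forall t, 0 <= t <= ipL b ->
    exists l : R, div_fun alpha b t h @[h --> 0^'+] --> l.

Definition Ddiv (R : realType) (alpha : R) (b : IP R) (t : R) : R :=
  Gamma (1 - alpha) * lim (div_fun alpha b t h @[h --> 0^'+]).

(* D_beta(U) := D_beta(t) for t in U (we take the midpoint of U) *)
Definition Dblock (R : realType) (alpha : R) (b : IP R) (p : R * R) : R :=
  Ddiv alpha b ((p.1 + p.2) / 2).

Definition Dinf (R : realType) (alpha : R) (b : IP R) : R :=
  Ddiv alpha b (ipL b).

Definition corr_lt (R : realType) (p q : (R * R) * (R * R)) : bool :=
  (p.1.1 < q.1.1) && (p.2.1 < q.2.1).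

Definition correspondence (R : realType) (b g : IP R)
    (s : seq ((R * R) * (R * R))) : Prop :=
  (forall j, j \in s -> blocks b j.1 /\ blocks g j.2) /\ sorted (@corr_lt R) s.

Definition dis_sum (R : realType) (s : seq ((R * R) * (R * R))) : R :=
  \sum_(j <- s) `|blen j.1 - blen j.2|.

Definition dis1 (R : realType) (b : IP R) (s : seq ((R * R) * (R * R))) : R :=
  dis_sum s + ipL b - \sum_(j <- s) blen j.1.
Definition dis2 (R : realType) (g : IP R) (s : seq ((R * R) * (R * R))) : R :=
  dis_sum s + ipL g - \sum_(j <- s) blen j.2.

Definition hdis (R : realType) (b g : IP R) (s : seq ((R * R) * (R * R))) : R :=
  Num.max (dis1 b s) (dis2 g s).

(* sup_j |D_beta(U_j) - D_gamma(V_j)| (0 for the empty correspondence) *)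
Definition adis (R : realType) (alpha : R) (b g : IP R)
    (s : seq ((R * R) * (R * R))) : R :=
  Num.max (Num.max (hdis b g s)
     (\big[Num.max/0]_(j <- s) `|Dblock alpha b j.1 - Dblock alpha g j.2|))
     `|Dinf alpha b - Dinf alpha g|.

Definition dH' (R : realType) (b g : IP R) : R :=
  inf [set hdis b g s | s in correspondence b g].

Definition dalpha (R : realType) (alpha : R) (b g : IP R) : R :=
  inf [set adis alpha b g s | s in correspondence b g].

Definition metric_open (T : Type) (R : realType) (d : T -> T -> R)
    (U : set T) : Prop :=
  forall x, U x -> exists e : R, 0 < e /\ forall y, d x y < e -> U y.

From HB Require Import structures.
From mathcomp Require Import all_boot all_order all_algebra.
From mathcomp Require Import all_classical all_reals all_analysis.
From mathcomp Require Import finmap measurable_realfun.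
From mathcomp Require Import ring lra.
Set Implicit Arguments. Unset Strict Implicit. Unset Printing Implicit Defensive.
Import Order.TTheory GRing.Theory Num.Theory.
Import numFieldNormedType.Exports.
Local Open Scope classical_set_scope.
Local Open Scope ring_scope.

(* (i) Take a regular partition with 2m blocks of length d and one with m blocks of
   length 2d.  Their sets C lie within 2d of each other, but every matched pair has a
   length mismatch d and at most m pairs fit, so every correspondence has distortion at
   least m d.  Both partitions are finite, hence alpha-diverse (with diversity 0).
   (ii) The alpha-distortion of a correspondence dominates its Hausdorff distortion.
   (iii) Let a correspondence have distortion e and x lie in C_beta.  Cutting the
   correspondence at x, the ends of the matched prefix in beta and gamma differ from x,
   and from each other, only by unmatched length and length mismatches, so
   d_H <= 2 d_H'.  Conversely, finitely many blocks carry all but e of the length of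
   beta; once d_H(beta, gamma) is small compared with their lengths, each of them has a
   block of gamma with nearby endpoints, and matching these blocks gives a
   correspondence of distortion O(e). *)

Lemma sumr_const_seq (R : pzSemiRingType) (T : Type) (s : seq T) (c : R) :
  \sum_(i <- s) c = (size s)%:R * c.
Proof. by rewrite big_const_seq count_predT iter_addr_0 mulr_natl. Qed.

Lemma split_upward_closed (T : Type) (r : rel T) (a : pred T) (s : seq T) :
  (forall x y, a x -> r x y -> a y) -> pairwise r s ->
  exists s1 s2, [/\ s = s1 ++ s2, all (predC a) s1 & all a s2].
Proof.
move=> aup; elim: s => [_ | x s IH] /=; first by exists [::], [::].
case/andP=> rxs /IH[s1 [s2 [es as1 as2]]]; have [ax|nax] := boolP (a x).
  exists [::], (x :: s); split=> //=; rewrite ax /=.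
  by apply: (sub_all _ rxs) => y; exact: aup ax.
by exists (x :: s1), s2; rewrite es /= nax.
Qed.

Section IntervalPartition.
Variable R : realType.
Implicit Types (b : IP R) (p q : R * R) (x : R).

Lemma ointP p x : oint p x <-> p.1 < x < p.2.
Proof. by rewrite /oint /= in_itv. Qed.

Lemma block_bounds b p : blocks b p -> [/\ 0 <= p.1, p.1 < p.2 & p.2 <= ipL b].
Proof. by move=> /blocks_sub [? [? ?]]. Qed.

Lemma blen_gt0 b p : blocks b p -> 0 < blen p.
Proof. by case/block_bounds => _ ? _; rewrite subr_gt0. Qed.

Lemma meeting_blocks_eq b p q : blocks b p -> blocks b q ->
  p.1 < q.2 -> q.1 < p.2 -> p = q.
Proof.
move=> bp bq pq qp; apply: contrapT => neq.
have [_ pp _] := block_bounds bp; have [_ qq _] := block_bounds bq.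
have hm : Num.max p.1 q.1 < Num.min p.2 q.2 by rewrite gt_max !lt_min pp pq qp qq.
set z := (Num.max p.1 q.1 + Num.min p.2 q.2) / 2.
have [] := midf_lt hm; rewrite -/z gt_max lt_min => /andP[p1z q1z] /andP[zp2 zq2].
have : (oint p `&` oint q) z by split; apply/ointP/andP.
by rewrite (blocks_disj bp bq neq).
Qed.

Lemma block_le_next b p q : blocks b p -> blocks b q -> p.1 < q.1 -> p.2 <= q.1.
Proof.
move=> bp bq pq; rewrite leNgt; apply/negP => qp.
have [_ qq _] := block_bounds bq.
have epq := meeting_blocks_eq bp bq (lt_trans pq qq) qp.
by move: pq; rewrite epq ltxx.
Qed.

Lemma block_eq_of_start b p q : blocks b p -> blocks b q -> p.1 = q.1 -> p = q.
Proof.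
move=> bp bq e; have [_ pp _] := block_bounds bp; have [_ qq _] := block_bounds bq.
by apply: (meeting_blocks_eq bp bq); [rewrite e | rewrite -e].
Qed.

Lemma CsetP b x :
  Cset b x <-> 0 <= x <= ipL b /\ forall p, blocks b p -> ~ oint p x.
Proof.
rewrite /Cset /= in_itv /=; split => [[hx nb]|[hx nb]]; split=> //.
  by move=> p bp px; apply: nb; exists p.
by move=> [p bp px]; exact: nb bp px.
Qed.

Lemma Cset_bounds b x : Cset b x -> 0 <= x <= ipL b.
Proof. by case/CsetP. Qed.

Lemma Cset0 b : Cset b 0.
Proof.
apply/CsetP; rewrite lexx ipL_ge0; split=> // q /block_bounds[q0 _ _] /ointP/andP[].
by rewrite ltNge q0.
Qed.

Lemma Cset_ipL b : Cset b (ipL b).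
Proof.
apply/CsetP; rewrite lexx ipL_ge0; split=> // q /block_bounds[_ _ qL] /ointP/andP[_].
by rewrite ltNge qL.
Qed.

Lemma Cset_block_ends b p : blocks b p -> Cset b p.1 /\ Cset b p.2.
Proof.
move=> bp; have [p0 pp pL] := block_bounds bp.
split; apply/CsetP; split.
- by rewrite p0 (le_trans (ltW pp)).
- move=> q bq /ointP/andP[q1 q2].
  have epq := meeting_blocks_eq bp bq q2 (lt_trans q1 pp).
  by rewrite epq ltxx in q1.
- by rewrite pL (le_trans p0 (ltW pp)).
- move=> q bq /ointP/andP[q1 q2].
  have epq := meeting_blocks_eq bp bq (lt_trans pp q2) q1.
  by rewrite epq ltxx in q2.
Qed.

Lemma Cset_outside_block b p x : blocks b p -> Cset b x -> x <= p.1 \/ p.2 <= x.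
Proof.
move=> bp /CsetP[_ nb]; case: (leP x p.1) => [|p1x]; first by left.
case: (leP p.2 x) => [|xp2]; first by right.
by case: (nb p bp); apply/ointP; rewrite p1x xp2.
Qed.

Lemma not_Cset_block b x :
  0 <= x <= ipL b -> ~ Cset b x -> exists2 p, blocks b p & oint p x.
Proof.
move=> hx nC; apply: contrapT => nex; apply: nC; apply/CsetP; split=> // p bp px.
by apply: nex; exists p.
Qed.

End IntervalPartition.

Section Mass.
Variables (R : realType) (b : IP R).
Implicit Types (p : R * R) (P Q : set (R * R)) (l : seq (R * R)).

Definition ointU P : set R := \bigcup_(p in P) oint p.

(* Finite when [P] consists of blocks of one partition, see [lebesgue_ointU]. *)
Definition mass P : R := fine ((@lebesgue_measure R) (ointU P)).

Lemma measurable_ointU P : measurable (ointU P).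
Proof. by apply: open_measurable; apply: bigcup_open => p _; exact: itv_open. Qed.

Lemma lebesgue_ointU P : P `<=` blocks b ->
  (@lebesgue_measure R) (ointU P) = (mass P)%:E.
Proof.
move=> Pb; rewrite fineK // ge0_fin_numE ?measure_ge0 //.
apply: (@le_lt_trans _ _ ((@lebesgue_measure R) `[0, ipL b]%classic)).
  2: by rewrite lebesgue_measure_itv /=; case: ifP => _; exact: ltry.
apply: (le_measure (@lebesgue_measure R) (mem_set (measurable_ointU P))).
  by apply/mem_set; exact: measurable_itv.
move=> x [p /Pb/block_bounds[p0 _ pL] /ointP/andP[p1x xp2]].
by rewrite /= in_itv /= (le_trans p0 (ltW p1x)) (le_trans (ltW xp2) pL).
Qed.

Lemma mass_ge0 P : 0 <= mass P.
Proof. exact/fine_ge0/measure_ge0. Qed.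

Lemma mass_le P Q : Q `<=` blocks b -> P `<=` Q -> mass P <= mass Q.
Proof.
move=> Qb PQ; have Pb := subset_trans PQ Qb.
rewrite -lee_fin -(lebesgue_ointU Pb) -(lebesgue_ointU Qb).
have mU S : ointU S \in measurable by apply/mem_set; exact: measurable_ointU.
apply: (le_measure (@lebesgue_measure R) (mU P) (mU Q)).
by move=> x [p Pp px]; exists p => //; apply: PQ.
Qed.

Lemma mass_setU P Q : P `<=` blocks b -> Q `<=` blocks b -> P `&` Q = set0 ->
  mass (P `|` Q) = mass P + mass Q.
Proof.
move=> Pb Qb PQ0; have PQb : P `|` Q `<=` blocks b by move=> p [/Pb|/Qb].
apply: EFin_inj; rewrite EFinD -(lebesgue_ointU PQb) -(lebesgue_ointU Pb).
rewrite -(lebesgue_ointU Qb) /ointU bigcup_setU measureU //; try exact: measurable_ointU.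
apply/seteqP; split=> // x [[p Pp px] [q Qq qx]].
have neq : p <> q.
  move=> epq; have : (P `&` Q) p by split; rewrite // epq.
  by rewrite PQ0.
by move/seteqP: (blocks_disj (Pb _ Pp) (Qb _ Qq) neq) => [+ _]; apply.
Qed.

Lemma mass_setD P Q : P `<=` blocks b -> Q `<=` P ->
  mass P = mass Q + mass (P `\` Q).
Proof.
move=> Pb QP; rewrite -mass_setU ?setDUK //; first exact: subset_trans QP Pb.
  by move=> p [/Pb].
by rewrite setDE setICA setICr setI0.
Qed.

Lemma mass_between a c : Cset b a -> Cset b c -> a <= c ->
  mass [set p | blocks b p /\ a <= p.1 /\ p.2 <= c] = c - a.
Proof.
move=> Ca Cc ac; set P := [set p | _].
have Pb : P `<=` blocks b by move=> p [].
have /andP[a0 _] := Cset_bounds Ca; have /andP[_ cL] := Cset_bounds Cc.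
apply: EFin_inj; rewrite -(lebesgue_ointU Pb).
have -> : (c - a)%:E = (@lebesgue_measure R) `]a, c[%classic.
  rewrite lebesgue_measure_itv /= lte_fin; have [|ca] := ltP a c; first by rewrite EFinB.
  have -> : c = a by apply/eqP; rewrite eq_le ca ac.
  by rewrite subrr.
have mac : `]a, c[%classic \in measurable by apply/mem_set; exact: measurable_itv.
apply/eqP; rewrite eq_le; apply/andP; split.
  apply: (le_measure (@lebesgue_measure R) (mem_set (measurable_ointU P)) mac).
  move=> x [p [_ [ap pc]] /ointP/andP[p1x xp2]]; rewrite /= in_itv /=.
  by rewrite (le_lt_trans ap p1x) (lt_le_trans xp2 pc).
have [N [mN N0 sN]] := blocks_cover b.
rewrite -(measureU0 (mu := @lebesgue_measure R) (measurable_ointU P) mN N0).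
apply: (le_measure (@lebesgue_measure R) mac).
  by apply/mem_set; apply: measurableU => //; exact: measurable_ointU.
move=> x; rewrite /= in_itv /= => /andP[ax xc].
have [[q bq /ointP/andP[q1x xq2]]|nq] := pselect ((\bigcup_(p in blocks b) oint p) x).
  left; exists q; last by apply/ointP/andP.
  split=> //; split.
    by case: (Cset_outside_block bq Ca) => // h; lra.
  by case: (Cset_outside_block bq Cc) => // h; lra.
right; apply: sN; split=> //; rewrite /= in_itv /=; apply/andP; split; lra.
Qed.

Lemma mass_blocks : mass (blocks b) = ipL b.
Proof.
rewrite -[ipL b]subr0 -(mass_between (Cset0 b) (Cset_ipL b) (ipL_ge0 b)).
by congr mass; apply/seteqP; split=> p; [move=> bp; have [] := block_bounds bp | case].
Qed.

Lemma mass_le_compl P Q : P `<=` blocks b -> Q `<=` blocks b -> P `&` Q = set0 ->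
  mass P <= ipL b - mass Q.
Proof.
move=> Pb Qb PQ0; rewrite lerBrDr -(mass_setU Pb Qb PQ0) -mass_blocks.
by apply: mass_le => // p [/Pb|/Qb].
Qed.

Lemma mass_seq l : [set` l] `<=` blocks b -> uniq l ->
  mass [set` l] = \sum_(p <- l) blen p.
Proof.
elim: l => [|p l IH] lb /=.
  move=> _; rewrite big_nil (_ : [set` [::]] = set0); last by apply/seteqP; split.
  by rewrite /mass /ointU bigcup_set0 measure0.
move=> /andP[pl ul]; rewrite big_cons.
have bp : blocks b p by apply: lb; rewrite /= mem_head.
have lb' : [set` l] `<=` blocks b by move=> q ql; apply: lb; rewrite /= inE ql orbT.
have -> : [set` p :: l] = [set p] `|` [set` l].
  apply/seteqP; split=> q /=; rewrite inE; first by case/orP=> [/eqP|]; [left | right].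
  by case=> [->|->]; rewrite ?eqxx ?orbT.
rewrite mass_setU //; first last.
- by apply/seteqP; split=> // q [/= -> ql]; move: pl; rewrite ql.
- by move=> q ->.
rewrite IH //; congr (_ + _); apply: EFin_inj; rewrite -lebesgue_ointU; last by move=> q ->.
have [_ pp _] := block_bounds bp.
by rewrite /ointU bigcup_set1 /oint lebesgue_measure_itv /= lte_fin pp EFinB.
Qed.

(* [c - a] is the mass of the blocks inside [[a, c]]; those not in [l1] are disjoint
   from [l1 ++ l2]. *)
Lemma sum_blen_between a c l1 l2 : Cset b a -> Cset b c -> a <= c ->
  [set` l1 ++ l2] `<=` blocks b -> uniq (l1 ++ l2) ->
  {in l1, forall p, a <= p.1 /\ p.2 <= c} ->
  {in l2, forall p, p.2 <= a \/ c <= p.1} ->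
  0 <= c - a - \sum_(p <- l1) blen p <= ipL b - \sum_(p <- l1 ++ l2) blen p.
Proof.
move=> Ca Cc ac lb ul in1 in2.
have l1b : [set` l1] `<=` blocks b by move=> p pl; apply: lb; rewrite /= mem_cat pl.
set B := [set p | blocks b p /\ a <= p.1 /\ p.2 <= c].
have Bb : B `<=` blocks b by move=> p [].
have l1B : [set` l1] `<=` B by move=> p pl; split; [exact: l1b | exact: in1].
have -> : c - a - \sum_(p <- l1) blen p = mass (B `\` [set` l1]).
  move: ul; rewrite cat_uniq => /andP[ul1 _].
  by rewrite -(mass_between Ca Cc ac) (mass_setD Bb l1B) mass_seq //; ring.
rewrite mass_ge0 -mass_seq //; apply: mass_le_compl => //; first by move=> p [/Bb].
apply/seteqP; split=> // p [[[bp [ap pc]] npl1]]; rewrite /= mem_cat => /orP[pl1|pl2] //.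
have [_ pp _] := block_bounds bp.
by case: (in2 p pl2) => h; lra.
Qed.

End Mass.

Section Correspondence.
Variable R : realType.
Implicit Types (b g : IP R) (x : R) (s : seq ((R * R) * (R * R))).

Lemma corr_lt_trans : transitive (@corr_lt R).
Proof.
move=> y x z /andP[xy1 xy2] /andP[yz1 yz2].
by apply/andP; split; [exact: lt_trans xy1 yz1 | exact: lt_trans xy2 yz2].
Qed.

Lemma correspondence_pairwise b g s :
  correspondence b g s -> pairwise (@corr_lt R) s.
Proof. by case=> _; rewrite sorted_pairwise //; exact: corr_lt_trans. Qed.

Lemma correspondence_fst_blocks b g s :
  correspondence b g s -> [set` [seq j.1 | j <- s]] `<=` blocks b.
Proof. by case=> hs _ p /mapP[j /hs[bj _] ->]. Qed.

Lemma correspondence_fst_uniq b g s :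
  correspondence b g s -> uniq [seq j.1 | j <- s].
Proof.
move=> /correspondence_pairwise; elim: s => //= j s IH /andP[js /IH ->].
rewrite andbT; apply/mapP => -[k ks ejk].
by move: (allP js k ks) => /andP[]; rewrite ejk ltxx.
Qed.

Lemma sum_blen_fst_le b g s :
  correspondence b g s -> \sum_(j <- s) blen j.1 <= ipL b.
Proof.
move=> hc; have hb := correspondence_fst_blocks hc.
rewrite -(big_map fst xpredT) -(mass_seq hb (correspondence_fst_uniq hc)).
by rewrite -(mass_blocks b); apply: (@mass_le _ b).
Qed.

Definition corr_swap s : seq ((R * R) * (R * R)) := [seq (j.2, j.1) | j <- s].

Lemma correspondence_swap b g s :
  correspondence b g s -> correspondence g b (corr_swap s).
Proof.
case=> hs ss; split; first by move=> j /mapP[k /hs[? ?] ->].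
by rewrite sorted_map; apply: sub_sorted ss => j k /andP[? ?]; apply/andP.
Qed.

Lemma sum_corr_swap (f : R * R -> R) s :
  \sum_(j <- corr_swap s) f j.1 = \sum_(j <- s) f j.2.
Proof. by rewrite big_map. Qed.

Lemma hdis_swap b g s : hdis g b (corr_swap s) = hdis b g s.
Proof.
rewrite /hdis /dis1 /dis2 /dis_sum !big_map /= maxC.
by congr (Num.max (_ + _ - _) (_ + _ - _)); apply: eq_bigr => j _; exact: distrC.
Qed.

Lemma sum_blen_snd_le b g s :
  correspondence b g s -> \sum_(j <- s) blen j.2 <= ipL g.
Proof. by move/correspondence_swap/sum_blen_fst_le; rewrite sum_corr_swap. Qed.

Lemma dis_sum_ge0 s : 0 <= dis_sum s.
Proof. exact: sumr_ge0. Qed.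

Lemma hdis_ge0 b g s : correspondence b g s -> 0 <= hdis b g s.
Proof.
move=> hc; rewrite le_max /dis1; have := sum_blen_fst_le hc; have := dis_sum_ge0 s.
by move=> ? ?; apply/orP; left; lra.
Qed.

(* For empty [s] the default [0] is the left end of every partition. *)
Definition prefix_end s : R := last 0 [seq j.1.2 | j <- s].

Lemma prefix_end_spec b g s1 s2 : correspondence b g (s1 ++ s2) ->
  [/\ Cset b (prefix_end s1), {in s1, forall j, j.1.2 <= prefix_end s1}
    & {in s2, forall j, prefix_end s1 <= j.1.1}].
Proof.
move=> hc; have jb j : j \in s1 ++ s2 -> blocks b j.1.
  by move=> js; apply: (correspondence_fst_blocks hc); exact: map_f.
case/lastP: s1 hc jb => [|t k] hc jb.
  split=> //; first exact: Cset0.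
  by move=> j /jb /block_bounds[].
have pw := correspondence_pairwise hc; move: pw jb.
rewrite /prefix_end map_rcons last_rcons cat_rcons pairwise_cat pairwise_cons.
move=> /and3P[/allrelP tks _ /andP[/allP ks _]] jb.
have kb : blocks b k.1 by apply: jb; rewrite mem_cat mem_head orbT.
have [_ kk _] := block_bounds kb.
split; first by case: (Cset_block_ends kb).
  move=> j; rewrite mem_rcons inE => /orP[/eqP -> // | jt].
  have /andP[jk _] := tks j k jt (mem_head _ _).
  have jb' : blocks b j.1 by apply: jb; rewrite mem_cat jt.
  exact: le_trans (block_le_next jb' kb jk) (ltW kk).
move=> j js2; have /andP[kj _] := ks j js2.
by apply: block_le_next kb _ kj; apply: jb; rewrite mem_cat inE js2 !orbT.
Qed.

Lemma prefix_end_le s x : 0 <= x -> {in s, forall j, j.1.2 <= x} -> prefix_end s <= x.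
Proof.
case/lastP: s => // t k x0 hx; rewrite /prefix_end map_rcons last_rcons.
by apply: hx; rewrite mem_rcons mem_head.
Qed.

End Correspondence.

Section SupInf.
Variables (R : realType) (T : Type) (A B : set T) (f : T -> T -> R).
Hypothesis f_ge0 : forall x y, 0 <= f x y.

Lemma sup_inf_le D : A !=set0 -> (forall x, A x -> exists2 y, B y & f x y <= D) ->
  sup [set inf [set f x y | y in B] | x in A] <= D.
Proof.
move=> [x0 Ax0] hA; apply: ge_sup; first by exists (inf [set f x0 y | y in B]), x0.
move=> _ [x Ax <-]; have [y By fxy] := hA x Ax; apply: le_trans fxy.
by apply: ge_inf; [exists 0 => _ [y' _ <-] | exists y].
Qed.

Lemma sup_inf_lt M d : B !=set0 -> (forall x y, A x -> B y -> f x y <= M) ->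
  sup [set inf [set f x y | y in B] | x in A] < d ->
  forall x, A x -> exists2 y, B y & f x y < d.
Proof.
move=> [y0 By0] fM hd x Ax.
have : inf [set f x y | y in B] < d.
  apply: le_lt_trans hd; apply: ub_le_sup; last by exists x.
  exists M => _ [x' Ax' <-]; apply: le_trans (fM x' y0 Ax' By0).
  by apply: ge_inf; [exists 0 => _ [y' _ <-] | exists y0].
by case/(inf_lt (ex_intro _ _ (ex_intro2 _ _ y0 By0 erefl))) => _ [y By <-]; exists y.
Qed.

End SupInf.

Section Hausdorff.
Variable R : realType.
Implicit Types (b g : IP R) (s : seq ((R * R) * (R * R))) (x y : R).

Lemma dH_le b g D :
  (forall x, Cset b x -> exists2 y, Cset g y & `|x - y| <= D) ->
  (forall y, Cset g y -> exists2 x, Cset b x & `|x - y| <= D) ->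
  dH b g <= D.
Proof.
move=> hb hg; rewrite /dH /hdist_sets ge_max; apply/andP; split.
  by apply: sup_inf_le => //; exists 0; exact: Cset0.
by apply: (sup_inf_le (f := fun y x => `|x - y|)) => //; exists 0; exact: Cset0.
Qed.

Lemma dH_lt b g d : dH b g < d ->
  (forall x, Cset b x -> exists2 y, Cset g y & `|x - y| < d) /\
  (forall y, Cset g y -> exists2 x, Cset b x & `|x - y| < d).
Proof.
have CM x y : Cset b x -> Cset g y -> `|x - y| <= ipL b + ipL g.
  move=> /Cset_bounds/andP[? ?] /Cset_bounds/andP[? ?].
  by rewrite ler_norml; apply/andP; split; lra.
rewrite /dH /hdist_sets gt_max => /andP[hbg hgb]; split.
  by apply: (sup_inf_lt (fun x y => normr_ge0 (x - y)) _ CM hbg); exists 0; exact: Cset0.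
apply: (sup_inf_lt (f := fun y x => `|x - y|) (fun y x => normr_ge0 (x - y)) _ _ hgb).
  by exists 0; exact: Cset0.
by move=> y x Cy Cx; exact: CM.
Qed.

Lemma prefix_end_mass b g s1 s2 : correspondence b g (s1 ++ s2) ->
  0 <= prefix_end s1 - \sum_(j <- s1) blen j.1
    <= ipL b - \sum_(j <- s1 ++ s2) blen j.1.
Proof.
move=> hc; have [Ca s1a s2a] := prefix_end_spec hc.
have /andP[a0 _] := Cset_bounds Ca.
have hb := correspondence_fst_blocks hc; have ub := correspondence_fst_uniq hc.
rewrite map_cat in hb ub.
have := sum_blen_between (Cset0 b) Ca a0 hb ub.
rewrite -map_cat !big_map subr0; apply.
  move=> _ /mapP[j js ->]; split; last exact: s1a.
  have jb : blocks b j.1 by apply: hb; rewrite /= mem_cat map_f.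
  by case/block_bounds: jb.
by move=> _ /mapP[j js ->]; right; exact: s2a.
Qed.

(* Cut [s] at [x] and let [a], [a'] be the ends of the matched prefix in [b] and [g].
   Then [x - a], and [a] resp. [a'] minus the length matched in the prefix, are
   unmatched length, hence bounded by the distortion. *)
Lemma correspondence_Cset_close b g s x : correspondence b g s -> Cset b x ->
  exists2 y, Cset g y & `|x - y| <= 2 * hdis b g s.
Proof.
move=> hc Cx; have /andP[x0 _] := Cset_bounds Cx.
have aup (u v : (R * R) * (R * R)) : x <= u.1.1 -> corr_lt u v -> x <= v.1.1.
  by move=> xu /andP[uv _]; exact: le_trans xu (ltW uv).
have [s1 [s2 [es /allP s1x /allP s2x]]] :=
  split_upward_closed aup (correspondence_pairwise hc).
rewrite {s}es in hc *.
have hb := correspondence_fst_blocks hc.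
have s1x' : {in s1, forall j, j.1.2 <= x}.
  move=> j js; have jb : blocks b j.1 by apply: hb; apply: map_f; rewrite mem_cat js.
  have [_ jj _] := block_bounds jb; have := s1x j js; rewrite /= -ltNge => jx.
  by case: (Cset_outside_block jb Cx) => // h; lra.
have hc' := correspondence_swap hc; rewrite /corr_swap map_cat in hc'.
have [Ca s1a _] := prefix_end_spec hc.
have [Ca' _ _] := prefix_end_spec hc'.
exists (prefix_end (corr_swap s1)) => //.
have ax : prefix_end s1 <= x := prefix_end_le x0 s1x'.
have gap : x - prefix_end s1 <= ipL b - \sum_(j <- s1 ++ s2) blen j.1.
  suff /andP[_] : 0 <= x - prefix_end s1 - \sum_(p <- [::]) blen p
      <= ipL b - \sum_(p <- [::] ++ [seq j.1 | j <- s1 ++ s2]) blen p.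
    by rewrite big_nil subr0 /= big_map.
  apply: sum_blen_between => //; first exact: correspondence_fst_uniq hc.
  move=> _ /mapP[j + ->]; rewrite mem_cat => /orP[js|js].
    by left; exact: s1a.
  by right; exact: s2x.
have /andP[mb1 mb2] := prefix_end_mass hc.
have /andP[mg1 mg2] := prefix_end_mass hc'.
rewrite -map_cat !sum_corr_swap in mg1 mg2.
have hD : `|\sum_(j <- s1) blen j.1 - \sum_(j <- s1) blen j.2| <= dis_sum (s1 ++ s2).
  rewrite -sumrB; apply: le_trans (ler_norm_sum _ _ _) _.
  by rewrite /dis_sum big_cat lerDl; exact: sumr_ge0.
have h1 : dis1 b (s1 ++ s2) <= hdis b g (s1 ++ s2) by rewrite le_max lexx.
have h2 : dis2 g (s1 ++ s2) <= hdis b g (s1 ++ s2) by rewrite le_max lexx orbT.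
move: hD h1 h2; rewrite /dis1 /dis2 !ler_norml => /andP[? ?] ? ?.
apply/andP; split; lra.
Qed.

Lemma correspondence_nonempty b g (f : seq ((R * R) * (R * R)) -> R) :
  [set f s | s in correspondence b g] !=set0.
Proof. by exists (f [::]), [::]. Qed.

Lemma dH'_le_hdis b g s : correspondence b g s -> dH' b g <= hdis b g s.
Proof.
move=> hc; apply: ge_inf; last by exists s.
by exists 0 => _ [s' hs' <-]; exact: hdis_ge0 hs'.
Qed.

Lemma dH_le_dH' b g : dH b g <= 2 * dH' b g.
Proof.
rewrite -ler_pdivrMl //; apply: lb_le_inf; first exact: correspondence_nonempty.
move=> _ [s hc <-]; rewrite ler_pdivrMl //.
apply: dH_le => [x Cx | y Cy]; first exact: correspondence_Cset_close hc Cx.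
have [x Cx hxy] := correspondence_Cset_close (correspondence_swap hc) Cy.
by exists x => //; rewrite distrC -(hdis_swap b g s).
Qed.

Lemma hdis_le_adis alpha b g s : hdis b g s <= adis alpha b g s.
Proof. by rewrite /adis le_max le_max lexx. Qed.

Lemma dH'_le_dalpha alpha b g : dH' b g <= dalpha alpha b g.
Proof.
apply: lb_le_inf; first exact: correspondence_nonempty.
by move=> _ [s hc <-]; exact: le_trans (dH'_le_hdis hc) (hdis_le_adis _ _ _ _).
Qed.

End Hausdorff.

Section LongBlocks.
Variables (R : realType) (b : IP R).
Implicit Types (c e : R) (p : R * R) (l : seq (R * R)).

Definition long_blocks c : set (R * R) := [set p | blocks b p /\ c <= blen p].

Lemma long_blocks_sub c : long_blocks c `<=` blocks b.
Proof. by move=> p []. Qed.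

Lemma size_long_seq_le c l : [set` l] `<=` long_blocks c -> uniq l ->
  (size l)%:R * c <= ipL b.
Proof.
move=> lc ul; have lb := subset_trans lc (@long_blocks_sub c).
rewrite -(mass_blocks b) (le_trans _ (@mass_le _ b _ _ (@subset_refl _ _) lb)) //.
by rewrite -sumr_const_seq (mass_seq lb ul) !big_seq; apply: ler_sum => p /lc[].
Qed.

Lemma long_blocks_finite c : 0 < c -> finite_set (long_blocks c).
Proof.
move=> c0; apply: contrapT => /(infinite_set_fset (Num.bound (ipL b / c)))[X Xc hX].
have := size_long_seq_le Xc (fset_uniq X); apply/negP; rewrite -ltNge.
have := archi_boundP (divr_ge0 (ipL_ge0 b) (ltW c0)); rewrite ltr_pdivrMr // => hb.
by apply: lt_le_trans hb _; rewrite ler_pM2r // ler_nat.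
Qed.

Lemma long_blocks_anti c c' : c' <= c -> long_blocks c `<=` long_blocks c'.
Proof. by move=> cc p [bp hp]; split=> //; exact: le_trans cc hp. Qed.

Lemma ointU_long_blocks_homo :
  {homo (fun n => ointU (long_blocks n.+1%:R^-1)) : n m / (n <= m)%N >-> (n <= m)%O}.
Proof.
move=> n m nm; rewrite subsetEset => x [p hp px]; exists p => //.
by apply: long_blocks_anti hp; rewrite lef_pV2 ?posrE // ler_nat.
Qed.

Lemma bigcup_ointU_long_blocks :
  \bigcup_n ointU (long_blocks n.+1%:R^-1) = ointU (blocks b).
Proof.
apply/seteqP; split=> x; first by move=> [n _ [p [bp _] px]]; exists p.
move=> [p bp px]; have p0 := blen_gt0 bp.
have := @archi_boundP _ (blen p)^-1; rewrite invr_ge0 ltW // => /(_ isT).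
set n := Num.bound _ => hn; exists n => //; exists p => //; split=> //.
rewrite -[blen p]invrK lef_pV2 ?posrE ?invr_gt0 //.
by rewrite (le_trans (ltW hn)) // ler_nat.
Qed.

Lemma long_blocks_mass_approx e : 0 < e ->
  exists2 c, 0 < c & ipL b - e < mass (long_blocks c).
Proof.
move=> e0; pose F n := ointU (long_blocks n.+1%:R^-1).
have mF n : measurable (F n) := measurable_ointU _.
have Fcvg := nondecreasing_cvg_mu (mu := @lebesgue_measure R) mF
  (ltac:(rewrite bigcup_ointU_long_blocks; exact: measurable_ointU)) ointU_long_blocks_homo.
have Fmono : {homo (@lebesgue_measure R \o F) : n m / (n <= m)%N >-> (n <= m)%E}.
  move=> n m nm; apply: (le_measure (@lebesgue_measure R) (mem_set (mF n))).
    exact: mem_set (mF m).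
  by rewrite -subsetEset; exact: ointU_long_blocks_homo.
have Lsup : (ipL b)%:E = ereal_sup (range (@lebesgue_measure R \o F)).
  rewrite -mass_blocks -(lebesgue_ointU (@subset_refl _ _)) -bigcup_ointU_long_blocks.
  exact: (cvg_unique (@ereal_hausdorff R) Fcvg (ereal_nondecreasing_cvgn Fmono)).
have : ((ipL b - e)%:E < ereal_sup (range (@lebesgue_measure R \o F)))%E.
  by rewrite -Lsup lte_fin ltrBlDr ltrDl.
move/ereal_sup_gt => -[_ [n _ <-]] /= hn; exists n.+1%:R^-1 => //.
by rewrite -lte_fin -(lebesgue_ointU (@long_blocks_sub _)).
Qed.

Lemma sorted_blocks_lt l : [set` l] `<=` blocks b -> uniq l ->
  sorted (fun p q : R * R => p.1 <= q.1) l -> pairwise (fun p q : R * R => p.1 < q.1) l.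
Proof.
move=> lb ul; rewrite sorted_pairwise; last by move=> q p r; exact: le_trans.
elim: l lb ul => //= p l IH lb /andP[pl ul] /andP[pls /IH ->] //; last first.
  by move=> q ql; apply: lb; rewrite /= inE ql orbT.
rewrite andbT; apply/allP => q ql; rewrite lt_neqAle (allP pls q ql) andbT.
apply/eqP => epq; have bp : blocks b p by apply: lb; rewrite /= mem_head.
have bq : blocks b q by apply: lb; rewrite /= inE ql orbT.
by move: pl; rewrite (block_eq_of_start bp bq epq) ql.
Qed.

Lemma exists_long_blocks_seq e : 0 < e -> exists c l,
  [/\ 0 < c, [set` l] `<=` long_blocks c, pairwise (fun p q : R * R => p.1 < q.1) l
    & ipL b - e < \sum_(p <- l) blen p].
Proof.
move=> e0; have [c c0 hc] := long_blocks_mass_approx e0.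
have [X eX] := (finite_fsetP (A := long_blocks c)).1 (long_blocks_finite c0).
pose l := sort (fun p q : R * R => p.1 <= q.1) X.
have el : [set` l] = long_blocks c.
  by rewrite eX; apply/seteqP; split=> p /=; rewrite mem_sort.
have lb : [set` l] `<=` blocks b by rewrite el; exact: long_blocks_sub.
have ul : uniq l by rewrite sort_uniq fset_uniq.
exists c, l; split; rewrite ?el //.
  by apply: sorted_blocks_lt => //; apply: sort_sorted => p q; exact: le_total.
by rewrite -(mass_seq lb ul) el.
Qed.

End LongBlocks.

Section Shadow.
Variables (R : realType) (b g : IP R) (d : R).
Hypothesis dH_lt_d : dH b g < d.
Implicit Types (U V : R * R) (l : seq (R * R)).

Lemma dH_bound_gt0 : 0 < d.
Proof.
have [y _ hy] := (dH_lt dH_lt_d).1 _ (Cset0 b).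
exact: le_lt_trans (normr_ge0 _) hy.
Qed.

Lemma ipL_le_dH : ipL g <= ipL b + d.
Proof.
have [x Cx] := (dH_lt dH_lt_d).2 _ (Cset_ipL g).
by have /andP[_ xL] := Cset_bounds Cx; rewrite ltr_norml => /andP[? ?]; lra.
Qed.

(* The midpoint of [U] is at distance at least [2 d] from [Cset b], hence lies in a
   block [V] of [g]; the endpoints of [U] and [V] lie in the sets [Cset] and avoid the
   other block, which pins them within [d] of each other. *)
Lemma block_shadow U : blocks b U -> 4 * d <= blen U ->
  exists2 V, blocks g V & `|V.1 - U.1| <= d /\ `|V.2 - U.2| <= d.
Proof.
move=> bU; rewrite /blen => hU; have [hb hg] := dH_lt dH_lt_d.
have [U0 UU UL] := block_bounds bU; have [CU1 CU2] := Cset_block_ends bU.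
set m := (U.1 + U.2) / 2; have em : 2 * m = U.1 + U.2 by rewrite /m; field.
have m0 : 0 <= m <= ipL g.
  have [y Cy] := hb _ (Cset_ipL b); have /andP[y0 yL] := Cset_bounds Cy.
  by rewrite ltr_norml => /andP[? ?]; apply/andP; split; lra.
have nCm : ~ Cset g m.
  move=> Cm; have [x Cx] := hg _ Cm; rewrite ltr_norml => /andP[? ?].
  by case: (Cset_outside_block bU Cx) => ?; lra.
have [V bV /ointP/andP[Vm mV]] := not_Cset_block m0 nCm.
have [CV1 CV2] := Cset_block_ends bV.
exists V => //; rewrite !ler_norml; split; apply/andP; split.
- rewrite lerBrDl leNgt; apply/negP => hV; have [w Cw] := hb _ CU1.
  rewrite ltr_norml => /andP[? ?]; have /CsetP[_ nCw] := Cw.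
  by apply: (nCw V bV); apply/ointP/andP; split; lra.
- have [z Cz] := hg _ CV1; rewrite ltr_norml => /andP[? ?].
  by case: (Cset_outside_block bU Cz) => ?; lra.
- have [z Cz] := hg _ CV2; rewrite ltr_norml => /andP[? ?].
  by case: (Cset_outside_block bU Cz) => ?; lra.
- rewrite lerBlDl leNgt; apply/negP => hV; have [w Cw] := hb _ CU2.
  rewrite ltr_norml => /andP[? ?]; have /CsetP[_ nCw] := Cw.
  by apply: (nCw V bV); apply/ointP/andP; split; lra.
Qed.

Lemma shadow_correspondence l (f : R * R -> R * R) :
  [set` l] `<=` long_blocks b (4 * d) -> pairwise (fun p q : R * R => p.1 < q.1) l ->
  {in l, forall U, blocks g (f U) /\ `|(f U).1 - U.1| <= d /\ `|(f U).2 - U.2| <= d} ->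
  correspondence b g [seq (U, f U) | U <- l].
Proof.
move=> lb pl hf; have d0 := dH_bound_gt0; split.
  by move=> _ /mapP[U Ul ->] /=; split; [exact: (lb U Ul).1 | exact: (hf U Ul).1].
rewrite sorted_map; apply: pairwise_sorted.
apply: (sub_in_pairwise (P := mem l)) pl; last exact/allP.
move=> U U' Ul U'l hUU'; apply/andP; split=> //=.
have [bU hU] := lb U Ul; have [bU' _] := lb U' U'l.
have hsep := block_le_next bU bU' hUU'.
have [_ [+ _]] := hf U Ul; have [_ [+ _]] := hf U' U'l.
by move: hU; rewrite /blen !ler_norml => ? /andP[? ?] /andP[? ?]; lra.
Qed.

Lemma hdis_shadow_le l (f : R * R -> R * R) :
  {in l, forall U, `|(f U).1 - U.1| <= d /\ `|(f U).2 - U.2| <= d} ->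
  hdis b g [seq (U, f U) | U <- l]
    <= (4 * (size l)%:R + 1) * d + (ipL b - \sum_(U <- l) blen U).
Proof.
move=> hf; have gb := ipL_le_dH; have d0 := dH_bound_gt0.
have hD : \sum_(U <- l) `|blen U - blen (f U)| <= (size l)%:R * (2 * d).
  rewrite -sumr_const_seq !big_seq.
  apply: ler_sum => U Ul; have [] := hf U Ul; rewrite /blen !ler_norml.
  by move=> /andP[? ?] /andP[? ?]; apply/andP; split; lra.
have hST : \sum_(U <- l) blen U - \sum_(U <- l) blen (f U)
    <= \sum_(U <- l) `|blen U - blen (f U)|.
  by rewrite -sumrB; apply: ler_sum => U _; exact: ler_norm.
have kd0 : 0 <= (size l)%:R * d by rewrite mulr_ge0 // ltW.
rewrite mulrCA in hD.
have -> : (4 * (size l)%:R + 1) * d = 4 * ((size l)%:R * d) + d by ring.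
rewrite /hdis /dis1 /dis2 /dis_sum !big_map /= ge_max.
by apply/andP; split; lra.
Qed.

End Shadow.

Lemma dH'_lt_of_dH_lt (R : realType) (b : IP R) e : 0 < e ->
  exists2 d, 0 < d & forall g, dH b g < d -> dH' b g < e.
Proof.
move=> e0; have [c [l [c0 lc pl hS]]] := exists_long_blocks_seq b (divr_gt0 e0 (ltr0n _ 2)).
set k : R := (size l)%:R; have k1 : 0 < 4 * k + 1 by rewrite ltr_wpDl ?mulr_ge0.
pose d := Num.min (c / 4) (e / 2 / (4 * k + 1)).
have d0 : 0 < d by rewrite lt_min !divr_gt0.
have dk : (4 * k + 1) * d <= e / 2 by rewrite mulrC -ler_pdivlMr // ge_min lexx orbT.
exists d => // g dHd.
have l4d : [set` l] `<=` long_blocks b (4 * d).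
  move=> U /lc[bU cU]; split=> //; apply: le_trans cU.
  by rewrite mulrC -ler_pdivlMr // ge_min lexx.
have shadow U : exists V, U \in l ->
    blocks g V /\ `|V.1 - U.1| <= d /\ `|V.2 - U.2| <= d.
  have [Ul|] := boolP (U \in l); last by exists U.
  have [bU hU] := l4d U Ul; have [V bV hV] := block_shadow dHd bU hU.
  by exists V.
have [f hf] := choice shadow.
apply: le_lt_trans (dH'_le_hdis (shadow_correspondence dHd l4d pl hf)) _.
apply: le_lt_trans (hdis_shadow_le dHd (fun U Ul => (hf U Ul).2)) _.
by rewrite -/k; lra.
Qed.

Lemma metric_open_dH_dH' (R : realType) (U : set (IP R)) :
  metric_open (@dH R) U <-> metric_open (@dH' R) U.
Proof.
split=> hU b Ub; have [e [e0 he]] := hU b Ub.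
  exists (e / 2); split=> [|g hg]; first by rewrite divr_gt0.
  by apply: he; apply: le_lt_trans (dH_le_dH' b g) _; rewrite mulrC -ltr_pdivlMr.
have [d d0 hd] := dH'_lt_of_dH_lt b e0.
by exists d; split=> // g /hd /he.
Qed.

Lemma nblocks_le (R : realType) (b : IP R) h t c : 0 < c ->
  (forall p, blocks b p -> c <= blen p) -> (nblocks b h t)%:R * c <= ipL b.
Proof.
move=> c0 hc; rewrite /nblocks; set S := (X in fset_set X).
have Sc : S `<=` long_blocks b c by move=> p [bp _]; split=> //; exact: hc.
have fS : finite_set S := sub_finite_set Sc (long_blocks_finite b c0).
apply: (size_long_seq_le (l := fset_set S)) (fset_uniq _).
by rewrite fset_setK.
Qed.

Lemma diverse_of_blen_ge (R : realType) (alpha c : R) (b : IP R) :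
  0 < alpha -> 0 < c -> (forall p, blocks b p -> c <= blen p) -> diverse alpha b.
Proof.
move=> a0 c0 hc t _; exists 0.
apply: (@squeeze_cvgr _ _ _ _ (fun _ => 0) (fun h => h `^ alpha * (ipL b / c))).
- apply: nearW => h; rewrite /div_fun mulr_ge0 ?powR_ge0 //=.
  by rewrite ler_wpM2l ?powR_ge0 // ler_pdivlMr // nblocks_le.
- exact: cvg_cst.
- by have := cvgMr_tmp (b := ipL b / c) (powR_cvg0 a0); rewrite mul0r; apply.
Qed.

Section Grid.
Variables (R : realType) (d : R).
Hypothesis d_gt0 : 0 < d.
Variable n : nat.

Lemma grid_point x : 0 <= x <= n%:R * d ->
  exists2 k, (k <= n)%N & x = k%:R * d \/ k%:R * d < x < k.+1%:R * d.
Proof.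
move=> /andP[x0 xn]; set k := Num.truncn (x / d).
have /andP[kx xk] := truncn_itv (divr_ge0 x0 (ltW d_gt0)).
rewrite ler_pdivlMr // in kx; rewrite ltr_pdivrMr // in xk.
have kn : (k <= n)%N by rewrite -(ler_nat R) -(ler_pM2r d_gt0) (le_trans kx xn).
exists k => //; have [<-|kxne] := eqVneq (k%:R * d) x; first by left.
by right; rewrite lt_neqAle kxne kx xk.
Qed.

Definition grid_blocks : set (R * R) :=
  [set p | exists2 k, (k < n)%N & p = (k%:R * d, k.+1%:R * d)].

Lemma grid_ipL_ge0 : 0 <= n%:R * d.
Proof. by rewrite mulr_ge0 // ltW. Qed.

Lemma grid_blocks_bounds p : grid_blocks p ->
  0 <= p.1 /\ p.1 < p.2 /\ p.2 <= n%:R * d.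
Proof.
move=> [k kn ->] /=; split; first by rewrite mulr_ge0 // ltW.
by rewrite ltr_pM2r // ler_pM2r // ltr_nat ler_nat.
Qed.

Lemma grid_blocks_disj p q : grid_blocks p -> grid_blocks q -> p <> q ->
  oint p `&` oint q = set0.
Proof.
move=> [k kn ->] [j jn ->] neq; apply/seteqP; split=> // x [].
move=> /ointP/andP[kx xk] /ointP/andP[jx xj]; apply: neq.
have := lt_trans kx xj; have := lt_trans jx xk; rewrite !ltr_pM2r // !ltr_nat !ltnS.
by move=> jk kj; have -> : k = j by apply/eqP; rewrite eqn_leq kj jk.
Qed.

(* The uncovered points are grid points. *)
Lemma grid_blocks_cover : (@lebesgue_measure R).-negligible
  (`[0, n%:R * d]%classic `\` \bigcup_(p in grid_blocks) oint p).
Proof.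
apply: (negligibleS (mu := @lebesgue_measure R) (A := \bigcup_k [set k%:R * d])).
  move=> x [/= + nx]; rewrite in_itv /= => hx.
  have [k kn [->|/andP[kx xk]]] := grid_point hx; first by exists k.
  case: nx; exists (k%:R * d, k.+1%:R * d); last exact/ointP/andP.
  exists k => //; rewrite -(ltr_nat R) -(ltr_pM2r d_gt0).
  by case/andP: hx => _; exact: lt_le_trans kx.
apply: negligible_bigcup => k.
by apply/negligibleP; [exact: measurable_set1 | exact: lebesgue_measure_set1].
Qed.

Definition grid : IP R :=
  mkIP grid_ipL_ge0 grid_blocks_bounds grid_blocks_disj grid_blocks_cover.

Lemma grid_blen p : blocks grid p -> blen p = d.
Proof. by move=> [k _ ->]; rewrite /blen /= mulrSr mulrDl mul1r addrAC subrr add0r. Qed.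

Lemma grid_Cset k : (k <= n)%N -> Cset grid (k%:R * d).
Proof.
move=> kn; apply/CsetP; split.
  by rewrite (mulr_ge0 _ (ltW d_gt0)) //= ler_pM2r // ler_nat.
move=> p [j jn ->] /ointP/andP[/=]; rewrite !ltr_pM2r // !ltr_nat ltnS => jk kj.
by move: (leq_trans jk kj); rewrite ltnn.
Qed.

Lemma grid_Cset_near x :
  0 <= x <= n%:R * d -> exists2 y, Cset grid y & `|x - y| <= d.
Proof.
move=> /grid_point[k kn hk]; exists (k%:R * d); first exact: grid_Cset.
case: hk => [->|/andP[kx]]; first by rewrite subrr normr0 ltW.
by rewrite mulrSr mulrDl mul1r ler_norml => xk; apply/andP; split; lra.
Qed.

Lemma grid_diverse alpha : 0 < alpha -> diverse alpha grid.
Proof. by move=> a0; apply: (diverse_of_blen_ge a0 d_gt0) => p /grid_blen ->. Qed.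

End Grid.

Section TwoGrids.
Variables (R : realType) (d : R) (m : nat).
Hypothesis d_gt0 : 0 < d.
(* Follows from [d_gt0]; it is the positivity proof the coarse grid is built with. *)
Hypothesis d2_gt0 : 0 < 2 * d.

Local Notation fine := (grid d_gt0 (2 * m)).
Local Notation coarse := (grid d2_gt0 m).

Lemma ipL_fine_coarse : ipL fine = ipL coarse.
Proof. by rewrite /= natrM; ring. Qed.

Lemma dH_fine_coarse_le : dH fine coarse <= 2 * d.
Proof.
apply: dH_le => [x /Cset_bounds hx | y /Cset_bounds hy].
  by rewrite ipL_fine_coarse in hx; exact: grid_Cset_near hx.
rewrite -ipL_fine_coarse in hy; have [x Cx hxy] := grid_Cset_near d_gt0 hy.
by exists x => //; rewrite distrC (le_trans hxy) // -{1}(mul1r d) ler_pM2r // ler1n.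
Qed.

Lemma dis2_fine_coarse_ge s : correspondence fine coarse s ->
  m%:R * d <= dis2 coarse s.
Proof.
move=> hc; have [hs _] := hc.
have e1 : dis_sum s = (size s)%:R * d.
  rewrite /dis_sum -sumr_const_seq big_seq [RHS]big_seq.
  apply: eq_bigr => j /hs[/grid_blen -> /grid_blen ->].
  by rewrite (_ : d - 2 * d = - d) ?normrN ?gtr0_norm //; ring.
have e2 : \sum_(j <- s) blen j.2 = (size s)%:R * (2 * d).
  rewrite -sumr_const_seq big_seq [RHS]big_seq.
  by apply: eq_bigr => j /hs[_ /grid_blen ->].
have := sum_blen_snd_le hc; rewrite /dis2 e1 e2 /= !(mulrCA _ 2 d) => ?; lra.
Qed.

Lemma dalpha_fine_coarse_ge alpha : m%:R * d <= dalpha alpha fine coarse.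
Proof.
apply: lb_le_inf; first exact: correspondence_nonempty.
move=> _ [s hc <-]; apply: le_trans (hdis_le_adis _ _ _ _).
by apply: le_trans (dis2_fine_coarse_ge hc) _; rewrite /hdis le_max lexx orbT.
Qed.

End TwoGrids.

Lemma exists_dH_small_dalpha_large (R : realType) (alpha eps : R) :
  0 < alpha -> 0 < eps ->
  exists b g : IP R, diverse alpha b /\ diverse alpha g /\
    dH b g < eps /\ dalpha alpha b g > 1 / eps.
Proof.
move=> a0 e0; have d0 : 0 < eps / 4 by rewrite divr_gt0.
have d20 : 0 < 2 * (eps / 4) by rewrite mulr_gt0.
set m := Num.bound (1 / (eps * (eps / 4))).
have hm : 1 / (eps * (eps / 4)) < m%:R.
  by apply: archi_boundP; rewrite ltW // divr_gt0 ?mulr_gt0.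
exists (grid d0 (2 * m)), (grid d20 m); split; first exact: grid_diverse.
split; first exact: grid_diverse.
split; first by apply: le_lt_trans (dH_fine_coarse_le _ _ _) _; lra.
apply: lt_le_trans (dalpha_fine_coarse_ge _ _ _ _).
by rewrite -ltr_pdivrMr // -mulrA -invfM.
Qed.

Theorem proposition3p5 (R : realType) (alpha : R) (halpha : 0 < alpha < 1) :
  (forall eps : R, 0 < eps ->
     exists b g : IP R, diverse alpha b /\ diverse alpha g /\
       dH b g < eps /\ dalpha alpha b g > 1 / eps) /\
  (forall b g : IP R, diverse alpha b -> diverse alpha g ->
       dH' b g <= dalpha alpha b g) /\
  (forall U : set (IP R), metric_open (@dH R) U <-> metric_open (@dH' R) U).
Proof.
have /andP[a0 _] := halpha.
split; first by move=> eps; exact: exists_dH_small_dalpha_large.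
split; first by move=> b g _ _; exact: dH'_le_dalpha.
exact: metric_open_dH_dH'.
Qed.
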